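(* Let $\beta>0$, $k_d>0$, $N$ constant and $t>0$. Let $(x,y)=r(\cos\phi,\sin\phi)$ with $r>0$, and set $\alpha=\beta rt$ and $\gamma=\cos(\phi/2)$. Let $$\psi_G=-\frac{N}{2\pi}\int_0^\infty\frac{k}{k^2+k_d^2}J_0\!\left(\left[\left(kx+\frac{\beta kt}{k^2+k_d^2}\right)^2+k^2y^2\right]^{1/2}\right)dk.$$ For $z\ge0$ define $$\delta_1(z)=1-\frac{k_d^2r^2}{\alpha(\sqrt{z^2+1}-z)^2},\qquad \delta_2(z)=1-\frac{k_d^2r^2}{\alpha(\sqrt{z^2+1}+z)^2},$$ and $$A_j(z)=\left[4\alpha\,\delta_j(z)\,(z^2+\gamma^2)\right]^{1/2},\qquad j=1,2.$$ (i) Near region, $r<\beta t/k_d^2$. Set $z_{01}=(\alpha-k_d^2r^2)/(\sqrt{4\alpha}\,k_dr)>0$. Then $$\psi_G=-\frac{N}{2\pi}\left(\int_0^{z_{01}}\frac{J_0(A_1(z))}{\sqrt{z^2+1}}dz+\int_0^{\infty}\frac{J_0(A_2(z))}{\sqrt{z^2+1}}dz\right)=-\frac{N}{2\pi}\int_{-z_{01}}^\infty\frac{J_0(A_2(z))}{\sqrt{z^2+1}}dz,$$ where in the last integral $\delta_2$ and $A_2$ are given by the same formulas for negative $z$. (ii) Far region, $r>\beta t/k_d^2$. Set $z_{02}=(k_d^2r^2-\alpha)/(\sqrt{4\alpha}\,k_dr)>0$. Then $$\psi_G=-\frac{N}{2\pi}\int_{z_{02}}^\infty\frac{J_0(A_2(z))}{\sqrt{z^2+1}}dz.$$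 In both cases the change of variables is $z=|(k^2+k_d^2)r^2-\alpha|/(2\sqrt{\alpha(k^2+k_d^2)r^2})$. Its inverse is $(k^2+k_d^2)r^2=\alpha(\sqrt{z^2+1}\mp z)^2$, with the minus sign for $k^2<\beta t/r-k_d^2$ and the plus sign otherwise.
   Context: $J_0$ is the Bessel function of the first kind of order zero. $\psi_G$ is the no-wind Rossby wave Green's function with inverse deformation radius $k_d$. *)

From Stdlib Require Import Arith Reals Lra ClassicalEpsilon.
Open Scope R_scope.

Definition J0_term (x : R) (m : nat) : R :=
  (-1) ^ m / (INR (fact m)) ^ 2 * (x / 2) ^ (2 * m).

Definition J0 (x : R) : R :=
  epsilon (inhabits 0) (fun l => infinite_sum (J0_term x) l).

Definition improper_int (f : R -> R) (a l : R) : Prop :=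
  (forall b, a <= b -> inhabited (Riemann_integrable f a b)) /\
  (forall eps, 0 < eps -> exists M, forall b (pr : Riemann_integrable f a b),
      a <= b -> M <= b -> Rabs (RiemannInt pr - l) < eps).

Definition psiG_integrand (beta kd t x y : R) (k : R) : R :=
  k / (k ^ 2 + kd ^ 2) *
  J0 (sqrt ((k * x + beta * k * t / (k ^ 2 + kd ^ 2)) ^ 2 + k ^ 2 * y ^ 2)).

Definition psiG_value (beta kd N t x y v : R) : Prop :=
  exists I, improper_int (psiG_integrand beta kd t x y) 0 I /\
            v = - (N / (2 * PI)) * I.

Definition delta1 (alpha kd r z : R) : R :=
  1 - kd ^ 2 * r ^ 2 / (alpha * (sqrt (z ^ 2 + 1) - z) ^ 2).
Definition delta2 (alpha kd r z : R) : R :=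
  1 - kd ^ 2 * r ^ 2 / (alpha * (sqrt (z ^ 2 + 1) + z) ^ 2).

Definition A_1 (alpha kd r gamma z : R) : R :=
  sqrt (4 * alpha * delta1 alpha kd r z * (z ^ 2 + gamma ^ 2)).
Definition A_2 (alpha kd r gamma z : R) : R :=
  sqrt (4 * alpha * delta2 alpha kd r z * (z ^ 2 + gamma ^ 2)).

From Stdlib Require Import Arith Reals Lra Lia Psatz ClassicalEpsilon.
From Coquelicot Require Import Coquelicot.
Local Open Scope R_scope.

(* Substituting [z = ((k^2 + kd^2) r^2 - alpha) / (2 sqrt (alpha (k^2 + kd^2) r^2))]
   maps [k] in [[0, +oo)] onto [z] in [[z0, +oo)], [z0 = (kd^2 r^2 - alpha) / (sqrt (4 alpha) kd r)],
   and turns the wavenumber integrand of [psi_G] into [J0 (A_2 z) / sqrt (z^2 + 1)]: the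
   argument of [J0] is rewritten with [cos (phi/2)^2 = (1 + cos phi) / 2].  The improper
   integrals converge because [|J0 x| = O(x^(-1/2))], read off a Lyapunov function of Bessel's
   equation, while [A_2 z >= sqrt (2 alpha) z] for large [z], so the new integrand is
   [O(z^(-3/2))].  In the near region [z0 = - z01 < 0], and the piece over [[-z01, 0]] is
   reflected onto the [A_1] integral over [[0, z01]] since [delta1 z = delta2 (-z)]. *)

Definition J0_coef (m : nat) : R := (-1) ^ m / INR (fact m) ^ 2 / 4 ^ m.

Lemma J0_coef_S n : J0_coef (S n) = - J0_coef n / (4 * INR (S n) ^ 2).
Proof.
  unfold J0_coef. rewrite fact_simpl, mult_INR.
  assert (INR (fact n) <> 0) by (apply not_0_INR, fact_neq_0).
  assert (INR (S n) <> 0) by (apply not_0_INR; lia).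
  simpl. field. repeat split; auto. apply pow_nonzero. lra.
Qed.

Lemma J0_coef_neq0 n : J0_coef n <> 0.
Proof.
  unfold J0_coef. assert (INR (fact n) <> 0) by (apply not_0_INR, fact_neq_0).
  repeat apply Rmult_integral_contrapositive_currified;
    try apply Rinv_neq_0_compat; apply pow_nonzero; lra.
Qed.

Lemma CV_radius_J0_coef : CV_radius J0_coef = p_infty.
Proof.
  apply CV_radius_infinite_DAlembert; [apply J0_coef_neq0|].
  apply is_lim_seq_ext with (fun n => / (4 * INR (S n) ^ 2)).
  - intro n. rewrite J0_coef_S. assert (Hc := J0_coef_neq0 n).
    assert (0 < INR (S n)) by (apply lt_0_INR; lia).
    replace (- J0_coef n / (4 * INR (S n) ^ 2) / J0_coef n) with (- / (4 * INR (S n) ^ 2))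
      by (field; lra).
    rewrite Rabs_Ropp, Rabs_pos_eq; [reflexivity|].
    apply Rlt_le, Rinv_0_lt_compat. nra.
  - change (Finite 0) with (Rbar_inv p_infty).
    apply is_lim_seq_inv; [|discriminate].
    apply is_lim_seq_le_p_loc with (fun n => INR n); [|apply is_lim_seq_INR].
    exists 0%nat. intros n _. rewrite S_INR. pose proof (pos_INR n). nra.
Qed.

Definition J0sq (y : R) : R := PSeries J0_coef y.
Definition J0sq' (y : R) : R := PSeries (PS_derive J0_coef) y.
Definition J0sq'' (y : R) : R := PSeries (PS_derive (PS_derive J0_coef)) y.

Lemma CV_radius_derive_J0_coef : CV_radius (PS_derive J0_coef) = p_infty.
Proof. rewrite CV_radius_derive; apply CV_radius_J0_coef. Qed.

Lemma CV_radius_derive2_J0_coef : CV_radius (PS_derive (PS_derive J0_coef)) = p_infty.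
Proof. rewrite !CV_radius_derive; apply CV_radius_J0_coef. Qed.

Lemma J0_J0sq x : J0 x = J0sq (x ^ 2).
Proof.
  assert (H : infinite_sum (J0_term x) (J0sq (x ^ 2))).
  { apply is_series_Reals, is_series_ext with (fun k => scal (pow_n (x ^ 2) k) (J0_coef k)).
    - intro n. unfold J0_term, J0_coef, scal; simpl; unfold mult; simpl.
      rewrite pow_n_pow. replace (n + (n + 0))%nat with (2 * n)%nat by lia.
      rewrite pow_mult.
      replace ((x / 2) ^ 2) with (x * (x * 1) * / 4) by field.
      rewrite (Rpow_mult_distr (x * (x * 1)) (/ 4) n), pow_inv.
      assert (INR (fact n) <> 0) by (apply not_0_INR, fact_neq_0).
      field. split; auto. apply pow_nonzero; lra.
    - apply PSeries_correct, CV_radius_inside. rewrite CV_radius_J0_coef. exact I. }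
  apply uniqueness_sum with (J0_term x); auto.
  unfold J0. apply epsilon_spec. eauto.
Qed.

Lemma is_derive_J0sq y : is_derive J0sq y (J0sq' y).
Proof. apply is_derive_PSeries. rewrite CV_radius_J0_coef. exact I. Qed.

Lemma is_derive_J0sq' y : is_derive J0sq' y (J0sq'' y).
Proof. apply is_derive_PSeries. rewrite CV_radius_derive_J0_coef. exact I. Qed.

(* Bessel's equation x^2 J0'' + x J0' + x^2 J0 = 0 in the variable y = x^2. *)
Lemma J0sq_ode y : 4 * y * J0sq'' y + 4 * J0sq' y + J0sq y = 0.
Proof.
  unfold J0sq, J0sq', J0sq''.
  rewrite Rmult_assoc, <- PSeries_incr_1, <- !PSeries_scal.
  assert (E1 : ex_pseries (PS_scal 4 (PS_incr_1 (PS_derive (PS_derive J0_coef)))) y).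
  { apply CV_radius_inside.
    rewrite CV_radius_scal, CV_radius_incr_1, CV_radius_derive2_J0_coef by lra. exact I. }
  assert (E2 : ex_pseries (PS_scal 4 (PS_derive J0_coef)) y).
  { apply CV_radius_inside. rewrite CV_radius_scal, CV_radius_derive_J0_coef by lra. exact I. }
  assert (E0 : ex_pseries J0_coef y).
  { apply CV_radius_inside. rewrite CV_radius_J0_coef. exact I. }
  rewrite <- PSeries_plus, <- PSeries_plus by auto using ex_pseries_plus.
  rewrite <- (PSeries_const_0 y). apply PSeries_ext. intro n.
  unfold PS_plus, PS_scal, PS_derive, PS_incr_1, plus, scal; simpl; unfold mult; simpl.
  destruct n as [|m].
  - rewrite J0_coef_S. unfold zero, J0_coef; simpl. field.
  - rewrite (J0_coef_S (S m)), J0_coef_S.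
    change (match m with 0%nat => 1 | S _ => INR m + 1 end) with (INR (S m)).
    rewrite !S_INR. pose proof (pos_INR m). field. lra.
Qed.

Definition dJ0 (x : R) : R := 2 * x * J0sq' (x ^ 2).

Lemma is_derive_J0 x : is_derive J0 x (dJ0 x).
Proof.
  apply is_derive_ext with (fun x => J0sq (x ^ 2)); [intro; symmetry; apply J0_J0sq|].
  apply (is_derive_comp J0sq (fun x => x ^ 2) x (J0sq' (x ^ 2)) (2 * x));
    [apply is_derive_J0sq|auto_derive; [exact I|ring]].
Qed.

Lemma is_derive_dJ0 x : x <> 0 -> is_derive dJ0 x (- dJ0 x / x - J0 x).
Proof.
  intro hx. unfold dJ0. rewrite J0_J0sq.
  replace (- (2 * x * J0sq' (x ^ 2)) / x - J0sq (x ^ 2))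
    with (2 * J0sq' (x ^ 2) + 2 * x * (2 * x * J0sq'' (x ^ 2))).
  2:{ pose proof (J0sq_ode (x ^ 2)) as E.
      replace (J0sq (x ^ 2)) with (- (4 * x ^ 2 * J0sq'' (x ^ 2) + 4 * J0sq' (x ^ 2))) by lra.
      field. exact hx. }
  apply (is_derive_mult (fun x => 2 * x) (fun x => J0sq' (x ^ 2))).
  - auto_derive; auto. ring.
  - apply (is_derive_comp J0sq' (fun x => x ^ 2)); [apply is_derive_J0sq'|].
    auto_derive; auto. ring.
  - intros; apply Rmult_comm.
Qed.

Lemma continuous_of_ex_derive (f : R -> R) x : ex_derive f x -> continuous f x.
Proof.
  intros [l H]. apply continuity_pt_filterlim, derivable_continuous_pt.
  exists l. apply is_derive_Reals, H.
Qed.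

Section BesselDecay.

Variables p q : R -> R.
Hypothesis p_derive : forall x, 0 < x -> is_derive p x (q x).
Hypothesis q_derive : forall x, 0 < x -> is_derive q x (- q x / x - p x).

(* A Lyapunov function: its derivative is [- p^2 / (2 x^2) <= 0], and
   [bessel_energy x - x p^2 = ((p + x q)^2 + (x q)^2) / (2 x) >= 0]. *)
Definition bessel_energy (x : R) : R :=
  x * p x ^ 2 + p x ^ 2 / (2 * x) + p x * q x + x * q x ^ 2.

Lemma is_derive_bessel_energy x :
  0 < x -> is_derive bessel_energy x (- p x ^ 2 / (2 * x ^ 2)).
Proof.
  intro hx. unfold bessel_energy.
  assert (Dp := is_derive_unique _ _ _ (p_derive x hx)).
  assert (Dq := is_derive_unique _ _ _ (q_derive x hx)).
  assert (Ep : ex_derive p x) by (eexists; apply p_derive, hx).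
  assert (Eq : ex_derive q x) by (eexists; apply q_derive, hx).
  auto_derive.
  - repeat split; auto. lra.
  - change (fun x0 => p x0) with p. change (fun x0 => q x0) with q.
    rewrite Dp, Dq. field. lra.
Qed.

Lemma bessel_energy_le x : 1 <= x -> bessel_energy x <= bessel_energy 1.
Proof.
  intro hx. destruct (Req_dec x 1) as [->|hne]; [lra|].
  destruct (MVT_gen bessel_energy 1 x (fun c => - p c ^ 2 / (2 * c ^ 2))) as [c [hc E]];
    rewrite ?Rmin_left, ?Rmax_right in * by lra.
  - intros y hy. apply is_derive_bessel_energy. lra.
  - intros y hy. apply derivable_continuous_pt. eexists.
    apply is_derive_Reals, is_derive_bessel_energy. lra.
  - assert (0 <= p c ^ 2 / (2 * c ^ 2)).
    { apply Rle_mult_inv_pos; [apply pow2_ge_0|nra]. }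
    unfold Rdiv in *. nra.
Qed.

Lemma bessel_energy_ge x : 0 < x -> x * p x ^ 2 <= bessel_energy x.
Proof.
  intro hx. unfold bessel_energy.
  assert (E : x * p x ^ 2 + p x ^ 2 / (2 * x) + p x * q x + x * q x ^ 2
              = x * p x ^ 2 + ((p x + x * q x) ^ 2 + (x * q x) ^ 2) / (2 * x))
    by (field; lra).
  rewrite E.
  assert (0 <= ((p x + x * q x) ^ 2 + (x * q x) ^ 2) / (2 * x)).
  { apply Rle_mult_inv_pos; [nra|lra]. }
  lra.
Qed.

Lemma bessel_sqrt_decay :
  exists D, 0 <= D /\ forall x, 1 <= x -> Rabs (p x) <= D / sqrt x.
Proof.
  exists (sqrt (bessel_energy 1)). split; [apply sqrt_pos|]. intros x hx.
  assert (hsx : 0 < sqrt x) by (apply sqrt_lt_R0; lra).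
  apply Rmult_le_reg_r with (sqrt x); [exact hsx|].
  replace (sqrt (bessel_energy 1) / sqrt x * sqrt x) with (sqrt (bessel_energy 1))
    by (field; lra).
  rewrite <- (sqrt_pow2 (Rabs (p x))), <- sqrt_mult_alt by (apply Rabs_pos || apply pow2_ge_0).
  apply sqrt_le_1_alt. rewrite pow2_abs, Rmult_comm.
  eapply Rle_trans; [apply bessel_energy_ge|apply bessel_energy_le]; lra.
Qed.

End BesselDecay.

Lemma J0_decay : exists D, 0 <= D /\ forall x, 1 <= x -> Rabs (J0 x) <= D / sqrt x.
Proof.
  apply (bessel_sqrt_decay J0 dJ0).
  - intros x _. apply is_derive_J0.
  - intros x hx. apply is_derive_dJ0. lra.
Qed.

Lemma continuous_J0 x : continuous J0 x.
Proof. apply continuous_of_ex_derive. eexists. apply is_derive_J0. Qed.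

Lemma ex_RInt_continuous_R (f : R -> R) a b :
  (forall x, continuous f x) -> ex_RInt f a b.
Proof. intro Hc. apply (ex_RInt_continuous (V := R_CompleteNormedModule)); auto. Qed.

Lemma RiemannInt_continuous (f : R -> R) a b :
  (forall x, continuous f x) ->
  exists pr : Riemann_integrable f a b, RiemannInt pr = RInt f a b.
Proof.
  intro Hc. exists (ex_RInt_Reals_0 _ _ _ (ex_RInt_continuous_R f a b Hc)).
  symmetry. apply RInt_Reals.
Qed.

Lemma improper_int_of_is_lim (f : R -> R) a (l : R) :
  (forall x, a <= x -> continuous f x) ->
  is_lim (fun b => RInt f a b) p_infty l -> improper_int f a l.
Proof.
  intros Hc Hl. split.
  - intros b hb. constructor. apply ex_RInt_Reals_0.
    apply (ex_RInt_continuous (V := R_CompleteNormedModule)).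
    intros z hz. rewrite Rmin_left, Rmax_right in hz by lra. apply Hc. lra.
  - intros eps heps. apply is_lim_spec in Hl.
    destruct (Hl (mkposreal eps heps)) as [M HM]. exists (M + 1).
    intros b pr _ hb. rewrite <- RInt_Reals. apply HM. lra.
Qed.

Lemma is_lim_RInt_Chasles (f : R -> R) a b (l : R) :
  (forall x, continuous f x) ->
  is_lim (fun c => RInt f a c) p_infty l ->
  is_lim (fun c => RInt f b c) p_infty (l - RInt f a b).
Proof.
  intros Hc Hl.
  apply is_lim_ext with (fun c => RInt f a c - RInt f a b).
  - intro c. rewrite <- (RInt_Chasles f a b c) by (apply ex_RInt_continuous_R; auto).
    unfold plus; simpl. ring.
  - eapply is_lim_minus; [exact Hl|apply is_lim_const|reflexivity].
Qed.

Section DecayTail.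

Variables (f : R -> R) (Z0 D : R).
Hypothesis f_cont : forall x, continuous f x.
Hypothesis Z0_pos : 0 < Z0.
Hypothesis f_decay : forall z, Z0 <= z -> Rabs (f z) <= D / (z * sqrt z).

Lemma RInt_decay_tail_le u v :
  Z0 <= u <= v -> Rabs (RInt f u v) <= 2 * D / sqrt u.
Proof.
  intros [hu huv].
  assert (hsu : 0 < sqrt u) by (apply sqrt_lt_R0; lra).
  assert (hsv : 0 < sqrt v) by (apply sqrt_lt_R0; lra).
  assert (D_ge0 : 0 <= D).
  { apply Rmult_le_reg_r with (/ (u * sqrt u)).
    - apply Rinv_0_lt_compat. nra.
    - rewrite Rmult_0_l. eapply Rle_trans; [apply Rabs_pos|apply f_decay; lra]. }
  assert (hbound_cont : forall z, Rmin u v <= z <= Rmax u v ->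
                          continuous (fun z => D / (z * sqrt z)) z).
  { intros z hz. rewrite Rmin_left, Rmax_right in hz by lra.
    assert (0 < sqrt z) by (apply sqrt_lt_R0; lra).
    apply continuous_of_ex_derive. auto_derive.
    repeat split; try lra. apply Rgt_not_eq. nra. }
  assert (Hprim : RInt (fun z => D / (z * sqrt z)) u v = 2 * D / sqrt u - 2 * D / sqrt v).
  { apply is_RInt_unique.
    replace (2 * D / sqrt u - 2 * D / sqrt v)
      with (minus (- 2 * D / sqrt v) (- 2 * D / sqrt u))
      by (unfold minus, plus, opp; simpl; field; lra).
    apply (is_RInt_derive (V := R_CompleteNormedModule) (fun z => - 2 * D / sqrt z));
      [|exact hbound_cont].
    intros z hz. rewrite Rmin_left, Rmax_right in hz by lra.
    assert (hsz : 0 < sqrt z) by (apply sqrt_lt_R0; lra).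
    assert (hzz := sqrt_sqrt z ltac:(lra)).
    auto_derive; [lra|].
    replace (z * sqrt z) with (sqrt z * sqrt z * sqrt z) by (rewrite hzz; reflexivity).
    field. lra. }
  eapply Rle_trans; [apply abs_RInt_le; [lra|apply ex_RInt_continuous_R; auto]|].
  apply Rle_trans with (RInt (fun z => D / (z * sqrt z)) u v).
  - apply RInt_le; [lra| |apply (ex_RInt_continuous (V := R_CompleteNormedModule)), hbound_cont|].
    + apply ex_RInt_continuous_R. intro. apply continuous_Rabs_comp, f_cont.
    + intros z hz. apply f_decay. lra.
  - rewrite Hprim. assert (0 <= 2 * D / sqrt v) by (apply Rle_mult_inv_pos; lra). lra.
Qed.

Lemma ex_lim_RInt_decay a : exists l : R, is_lim (fun b => RInt f a b) p_infty l.
Proof.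
  destruct (proj1 (Hierarchy.filterlim_locally_cauchy (U := R_CompleteSpace)
                      (F := Rbar_locally p_infty) (fun b => RInt f a b))) as [l Hl].
  2:{ exists l. exact Hl. }
  intro eps.
  exists (fun u => Rmax Z0 ((2 * D / eps) ^ 2 + 1) < u). split.
  { exists (Rmax Z0 ((2 * D / eps) ^ 2 + 1)). auto. }
  assert (Hsmall : forall u v, Rmax Z0 ((2 * D / eps) ^ 2 + 1) < u -> u <= v ->
                     Rabs (RInt f a v - RInt f a u) < eps).
  { intros u v hu huv.
    pose proof (Rmax_l Z0 ((2 * D / eps) ^ 2 + 1)).
    pose proof (Rmax_r Z0 ((2 * D / eps) ^ 2 + 1)).
    replace (RInt f a v - RInt f a u) with (RInt f u v).
    2:{ rewrite <- (RInt_Chasles f a u v) by (apply ex_RInt_continuous_R; auto).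
        unfold plus; simpl. lra. }
    eapply Rle_lt_trans; [apply RInt_decay_tail_le; lra|].
    assert (hsu : 2 * D / eps < sqrt u).
    { destruct (Rle_lt_dec (2 * D / eps) 0); [apply Rle_lt_trans with 0; auto; apply sqrt_lt_R0; lra|].
      rewrite <- (sqrt_pow2 (2 * D / eps)) by lra. apply sqrt_lt_1_alt. split; [apply pow2_ge_0|lra]. }
    assert (0 < sqrt u) by (apply sqrt_lt_R0; lra).
    pose proof (cond_pos eps).
    apply Rmult_lt_reg_r with (sqrt u); auto.
    replace (2 * D / sqrt u * sqrt u) with (2 * D) by (field; lra).
    apply Rmult_lt_reg_r with (/ eps); [apply Rinv_0_lt_compat; lra|].
    replace (eps * sqrt u * / eps) with (sqrt u) by (field; lra). exact hsu. }
  intros u v hu hv. change (Rabs (RInt f a v - RInt f a u) < eps).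
  destruct (Rle_lt_dec u v).
  - apply Hsmall; auto.
  - rewrite Rabs_minus_sym. apply Hsmall; auto. lra.
Qed.

End DecayTail.

Lemma is_lim_RInt_comp (f phi dphi : R -> R) a (l : R) :
  (forall x, continuous f x) ->
  (forall k, is_derive phi k (dphi k)) -> (forall k, continuous dphi k) ->
  is_lim phi p_infty p_infty ->
  is_lim (fun b => RInt f (phi a) b) p_infty l ->
  is_lim (fun b => RInt (fun k => dphi k * f (phi k)) a b) p_infty l.
Proof.
  intros Hf Hphi Hdphi Hinf Hl.
  apply is_lim_ext with (fun b => RInt f (phi a) (phi b)).
  - intro b. symmetry. apply (RInt_comp (V := R_CompleteNormedModule)); auto.
  - apply (is_lim_comp (fun b => RInt f (phi a) b) phi p_infty l p_infty); auto.
    exists 0. intros. discriminate.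
Qed.

Lemma Rabs_lt_sqrt_sq_add1 z : Rabs z < sqrt (z ^ 2 + 1).
Proof.
  rewrite <- sqrt_Rsqr_abs. apply sqrt_lt_1_alt. split; [apply Rle_0_sqr|].
  unfold Rsqr. simpl. lra.
Qed.

Lemma sqrt_sq_add1_add_pos z : 0 < sqrt (z ^ 2 + 1) + z.
Proof.
  pose proof (Rabs_lt_sqrt_sq_add1 z). pose proof (Rle_abs (- z)).
  rewrite Rabs_Ropp in *. lra.
Qed.

Section Integrands.

Variables alpha kd r gamma : R.
Hypothesis alpha_pos : 0 < alpha.

Definition f1 (z : R) : R := J0 (A_1 alpha kd r gamma z) / sqrt (z ^ 2 + 1).
Definition f2 (z : R) : R := J0 (A_2 alpha kd r gamma z) / sqrt (z ^ 2 + 1).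

Lemma f1_f2_opp z : f1 z = f2 (- z).
Proof.
  unfold f1, f2, A_1, A_2, delta1, delta2.
  replace ((- z) ^ 2) with (z ^ 2) by ring.
  replace (sqrt (z ^ 2 + 1) + - z) with (sqrt (z ^ 2 + 1) - z) by ring.
  reflexivity.
Qed.

Lemma continuous_f2 z : continuous f2 z.
Proof.
  pose proof (sqrt_sq_add1_add_pos z). pose proof (Rabs_lt_sqrt_sq_add1 z).
  pose proof (Rabs_pos z). pose proof (pow2_ge_0 z).
  apply (continuous_mult (K := R_AbsRing) (fun z => J0 (A_2 alpha kd r gamma z))
           (fun z => / sqrt (z ^ 2 + 1))).
  - apply (continuous_comp (fun z => A_2 alpha kd r gamma z) J0); [|apply continuous_J0].
    apply continuous_sqrt_comp, continuous_of_ex_derive.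
    unfold delta2. auto_derive. simpl in *. split; [lra|split; [|exact I]].
    apply Rgt_not_eq, Rmult_lt_0_compat; nra.
  - apply continuous_of_ex_derive. auto_derive.
    simpl in *. repeat split; lra.
Qed.

Lemma continuous_f1 z : continuous f1 z.
Proof.
  apply continuous_ext with (fun z => f2 (- z)); [intro; symmetry; apply f1_f2_opp|].
  apply (continuous_comp Ropp f2); [|apply continuous_f2].
  apply continuous_of_ex_derive. auto_derive. exact I.
Qed.

Lemma RInt_f1_f2 a : RInt f1 0 a = RInt f2 (- a) 0.
Proof.
  assert (H : is_RInt f2 (- a) (- 0) (RInt f2 (- a) 0)).
  { rewrite Ropp_0. apply (RInt_correct (V := R_CompleteNormedModule)).
    apply ex_RInt_continuous_R, continuous_f2. }
  apply is_RInt_comp_opp, is_RInt_swap, is_RInt_opp in H. rewrite opp_opp in H.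
  apply is_RInt_unique, (is_RInt_ext _ _ _ _ _ (fun y _ => eq_sym (f1_f2_opp y))).
  eapply is_RInt_ext; [|exact H]. intros y _. apply opp_opp.
Qed.

Lemma delta2_ge_half z : 0 < z -> kd ^ 2 * r ^ 2 <= alpha * z ^ 2 ->
  1 / 2 <= delta2 alpha kd r z.
Proof.
  intros hz hkz. unfold delta2.
  pose proof (Rabs_lt_sqrt_sq_add1 z) as hw. rewrite Rabs_pos_eq in hw by lra.
  assert (hw2 : 4 * z ^ 2 <= (sqrt (z ^ 2 + 1) + z) ^ 2) by nra.
  assert (hden : 0 < alpha * (sqrt (z ^ 2 + 1) + z) ^ 2)
    by (apply Rmult_lt_0_compat; [lra|apply pow_lt; lra]).
  assert (kd ^ 2 * r ^ 2 / (alpha * (sqrt (z ^ 2 + 1) + z) ^ 2) <= 1 / 2).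
  { apply Rmult_le_reg_r with (alpha * (sqrt (z ^ 2 + 1) + z) ^ 2); [exact hden|].
    replace (kd ^ 2 * r ^ 2 / (alpha * (sqrt (z ^ 2 + 1) + z) ^ 2)
             * (alpha * (sqrt (z ^ 2 + 1) + z) ^ 2)) with (kd ^ 2 * r ^ 2) by (field; lra).
    nra. }
  lra.
Qed.

Lemma A_2_ge z : 0 < z -> kd ^ 2 * r ^ 2 <= alpha * z ^ 2 ->
  sqrt (2 * alpha) * z <= A_2 alpha kd r gamma z.
Proof.
  intros hz hkz. pose proof (delta2_ge_half z hz hkz). pose proof (pow2_ge_0 gamma).
  assert (hc : 0 <= sqrt (2 * alpha)) by apply sqrt_pos.
  rewrite <- (sqrt_pow2 (sqrt (2 * alpha) * z)) by nra.
  unfold A_2. apply sqrt_le_1_alt.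
  rewrite Rpow_mult_distr, pow2_sqrt by lra.
  assert (z ^ 2 <= 2 * delta2 alpha kd r z * (z ^ 2 + gamma ^ 2)) by nra.
  replace (4 * alpha * delta2 alpha kd r z * (z ^ 2 + gamma ^ 2))
    with (2 * alpha * (2 * delta2 alpha kd r z * (z ^ 2 + gamma ^ 2))) by ring.
  apply Rmult_le_compat_l; lra.
Qed.

Lemma f2_decay : exists Z0 D, 0 < Z0 /\
  forall z, Z0 <= z -> Rabs (f2 z) <= D / (z * sqrt z).
Proof.
  destruct J0_decay as [D [hD HJ]].
  set (c := sqrt (2 * alpha)). assert (hc : 0 < c) by (apply sqrt_lt_R0; lra).
  assert (hsa : 0 < sqrt alpha) by (apply sqrt_lt_R0; lra).
  assert (hsc : 0 < sqrt c) by (apply sqrt_lt_R0; lra).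
  (* [z >= Z0] gives [z >= 1] and [c z >= 1] for [J0_decay], and [sqrt alpha z >= |kd r|]
     for [A_2_ge]. *)
  set (Z0 := 1 + Rabs (kd * r) / sqrt alpha + / c).
  assert (h1 : 0 <= Rabs (kd * r) / sqrt alpha) by (apply Rle_mult_inv_pos; [apply Rabs_pos|lra]).
  assert (h2 : 0 < / c) by (apply Rinv_0_lt_compat; lra).
  exists Z0, (D / sqrt c). split; [unfold Z0; lra|]. intros z hz.
  assert (hz1 : 1 <= z) by (unfold Z0 in hz; lra).
  assert (hsz : 0 < sqrt z) by (apply sqrt_lt_R0; lra).
  assert (hcz : 1 <= c * z).
  { replace 1 with (c * / c) by (field; lra). apply Rmult_le_compat_l; unfold Z0 in hz; lra. }
  assert (hkz : kd ^ 2 * r ^ 2 <= alpha * z ^ 2).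
  { assert (Rabs (kd * r) <= sqrt alpha * z).
    { replace (Rabs (kd * r)) with (sqrt alpha * (Rabs (kd * r) / sqrt alpha)) by (field; lra).
      apply Rmult_le_compat_l; unfold Z0 in hz; lra. }
    rewrite <- (pow2_sqrt alpha), <- !Rpow_mult_distr, <- (pow2_abs (kd * r)) by lra.
    apply pow_incr. split; [apply Rabs_pos|lra]. }
  assert (hA := A_2_ge z ltac:(lra) hkz). fold c in hA.
  set (A := A_2 alpha kd r gamma z) in *.
  assert (hsA : sqrt c * sqrt z <= sqrt A).
  { rewrite <- sqrt_mult by lra. apply sqrt_le_1_alt. exact hA. }
  pose proof (Rabs_lt_sqrt_sq_add1 z) as hw. rewrite Rabs_pos_eq in hw by lra.
  unfold f2. fold A. rewrite Rabs_div, (Rabs_pos_eq (sqrt _)) by (apply sqrt_pos || lra).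
  apply Rle_trans with (D / sqrt A / z).
  - apply Rmult_le_compat; [apply Rabs_pos|apply Rlt_le, Rinv_0_lt_compat; lra|apply HJ; lra|].
    apply Rinv_le_contravar; lra.
  - replace (D / (sqrt c) / (z * sqrt z)) with (D / (sqrt c * sqrt z) / z) by (field; lra).
    apply Rmult_le_compat_r; [apply Rlt_le, Rinv_0_lt_compat; lra|].
    apply Rmult_le_compat_l; [exact hD|]. apply Rinv_le_contravar; [nra|exact hsA].
Qed.

End Integrands.

Section Substitution.

Variables beta kd t r phi : R.
Hypotheses (beta_pos : 0 < beta) (kd_pos : 0 < kd) (t_pos : 0 < t) (r_pos : 0 < r).

Let alpha := beta * r * t.

Lemma alpha_pos : 0 < alpha.
Proof. unfold alpha. apply Rmult_lt_0_compat; [apply Rmult_lt_0_compat|]; auto. Qed.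

Lemma wavenumber_sq_pos k : 0 < k ^ 2 + kd ^ 2.
Proof. pose proof (pow2_ge_0 k). pose proof (pow_lt kd 2 kd_pos). lra. Qed.

(* [zsub] is the paper's substitution without the absolute value, written through
   [s = sqrt ((k^2 + kd^2) r^2 / alpha)] as [z = (s - 1/s) / 2]; its inverse is
   [s = sqrt (z^2 + 1) + z], i.e. [(k^2 + kd^2) r^2 = alpha (sqrt (z^2 + 1) + z)^2]. *)
Definition zsub_scale (k : R) : R := r * sqrt (k ^ 2 + kd ^ 2) / sqrt alpha.
Definition zsub (k : R) : R := (zsub_scale k - / zsub_scale k) / 2.
Definition dzsub (k : R) : R := k / (k ^ 2 + kd ^ 2) * ((zsub_scale k + / zsub_scale k) / 2).

Lemma zsub_scale_pos k : 0 < zsub_scale k.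
Proof.
  pose proof (wavenumber_sq_pos k). pose proof alpha_pos.
  apply Rdiv_lt_0_compat; [apply Rmult_lt_0_compat; auto|]; apply sqrt_lt_R0; auto.
Qed.

Lemma zsub_scale_sq k : zsub_scale k ^ 2 = r ^ 2 * (k ^ 2 + kd ^ 2) / alpha.
Proof.
  pose proof (wavenumber_sq_pos k). pose proof alpha_pos.
  unfold zsub_scale, Rdiv. rewrite !Rpow_mult_distr, pow_inv, !pow2_sqrt by lra. reflexivity.
Qed.

Lemma sqrt_zsub_sq_add1 k : sqrt (zsub k ^ 2 + 1) = (zsub_scale k + / zsub_scale k) / 2.
Proof.
  pose proof (zsub_scale_pos k). pose proof (Rinv_0_lt_compat _ (zsub_scale_pos k)).
  rewrite <- (sqrt_pow2 ((zsub_scale k + / zsub_scale k) / 2)) by lra.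
  f_equal. unfold zsub. field. lra.
Qed.

Lemma sqrt_zsub_sq_add1_add k : sqrt (zsub k ^ 2 + 1) + zsub k = zsub_scale k.
Proof. rewrite sqrt_zsub_sq_add1. unfold zsub. pose proof (zsub_scale_pos k). field. lra. Qed.

Lemma zsub_0 : zsub 0 = (kd ^ 2 * r ^ 2 - alpha) / (sqrt (4 * alpha) * kd * r).
Proof.
  pose proof alpha_pos.
  assert (ha : 0 < sqrt alpha) by (apply sqrt_lt_R0; auto).
  assert (ha2 : sqrt alpha * sqrt alpha = alpha) by (apply sqrt_sqrt; lra).
  rewrite sqrt_mult by lra.
  replace (sqrt 4) with 2 by (rewrite <- (sqrt_pow2 2) by lra; f_equal; ring).
  unfold zsub, zsub_scale. replace (0 ^ 2 + kd ^ 2) with (kd ^ 2) by ring.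
  rewrite sqrt_pow2 by lra.
  replace (kd ^ 2 * r ^ 2 - alpha) with (kd ^ 2 * r ^ 2 - sqrt alpha * sqrt alpha) by lra.
  field. split; lra.
Qed.

Lemma is_derive_zsub k : is_derive zsub k (dzsub k).
Proof.
  pose proof (wavenumber_sq_pos k). pose proof alpha_pos. pose proof (zsub_scale_pos k).
  assert (hu : 0 < sqrt (k ^ 2 + kd ^ 2)) by (apply sqrt_lt_R0; auto).
  assert (hu2 : sqrt (k ^ 2 + kd ^ 2) * sqrt (k ^ 2 + kd ^ 2) = k ^ 2 + kd ^ 2)
    by (apply sqrt_sqrt; lra).
  assert (ha : 0 < sqrt alpha) by (apply sqrt_lt_R0; auto).
  unfold zsub, dzsub, zsub_scale in *. auto_derive.
  - simpl in *. repeat split; lra.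
  - simpl in *. set (u := sqrt (k * (k * 1) + kd * (kd * 1))) in *.
    replace (k * (k * 1) + kd * (kd * 1)) with (u * u) by auto.
    field. lra.
Qed.

Lemma continuous_dzsub k : continuous dzsub k.
Proof.
  pose proof (wavenumber_sq_pos k). pose proof alpha_pos.
  assert (hu : 0 < sqrt (k ^ 2 + kd ^ 2)) by (apply sqrt_lt_R0; auto).
  assert (ha : 0 < sqrt alpha) by (apply sqrt_lt_R0; auto).
  apply continuous_of_ex_derive. unfold dzsub, zsub_scale. auto_derive.
  simpl in *. repeat split; try lra. apply Rgt_not_eq, Rdiv_lt_0_compat; nra.
Qed.

Lemma is_lim_zsub : is_lim zsub p_infty p_infty.
Proof.
  pose proof alpha_pos.
  assert (ha : 0 < sqrt alpha) by (apply sqrt_lt_R0; auto).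
  assert (Hs : is_lim zsub_scale p_infty p_infty).
  { apply is_lim_le_p_loc with (fun k => k * (r / sqrt alpha)).
    - exists 0. intros k hk. unfold zsub_scale.
      replace (r * sqrt (k ^ 2 + kd ^ 2) / sqrt alpha)
        with (sqrt (k ^ 2 + kd ^ 2) * (r / sqrt alpha)) by (field; lra).
      apply Rmult_le_compat_r; [apply Rle_mult_inv_pos; lra|].
      rewrite <- (sqrt_pow2 k) at 1 by lra. apply sqrt_le_1_alt.
      pose proof (pow2_ge_0 kd). lra.
    - pose proof (is_lim_scal_r _ (r / sqrt alpha) _ _ (is_lim_id p_infty)) as Hlin.
      rewrite (is_Rbar_mult_unique p_infty (r / sqrt alpha) p_infty) in Hlin
        by (apply is_Rbar_mult_p_infty_pos, Rdiv_lt_0_compat; auto).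
      exact Hlin. }
  assert (Hd : is_lim (fun k => zsub_scale k - / zsub_scale k) p_infty p_infty).
  { eapply is_lim_minus; [exact Hs|apply is_lim_inv; [exact Hs|discriminate]|].
    reflexivity. }
  pose proof (is_lim_scal_r _ (/ 2) _ _ Hd) as Hz.
  rewrite (is_Rbar_mult_unique p_infty (/ 2) p_infty) in Hz
    by (apply is_Rbar_mult_p_infty_pos; simpl; lra).
  exact Hz.
Qed.

Let gamma := cos (phi / 2).

Lemma A_2_zsub k :
  A_2 alpha kd r gamma (zsub k)
  = sqrt ((k * (r * cos phi) + beta * k * t / (k ^ 2 + kd ^ 2)) ^ 2
          + k ^ 2 * (r * sin phi) ^ 2).
Proof.
  unfold A_2. f_equal. unfold delta2. rewrite sqrt_zsub_sq_add1_add.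
  pose proof (wavenumber_sq_pos k). pose proof alpha_pos. pose proof (zsub_scale_pos k).
  assert (hg : gamma ^ 2 = (1 + cos phi) / 2).
  { unfold gamma. replace phi with (2 * (phi / 2)) at 2 by field.
    rewrite cos_2a_cos. field. }
  assert (hsc : sin phi ^ 2 = 1 - cos phi ^ 2).
  { pose proof (sin2_cos2 phi). unfold Rsqr in *. simpl. lra. }
  unfold zsub. rewrite hg.
  replace (((zsub_scale k - / zsub_scale k) / 2) ^ 2)
    with ((zsub_scale k ^ 2 + / zsub_scale k ^ 2 - 2) / 4) by (field; lra).
  rewrite zsub_scale_sq, Rpow_mult_distr with (x := r) (y := sin phi), hsc.
  unfold alpha. field. repeat split; lra.
Qed.

Lemma psiG_integrand_zsub k :
  dzsub k * f2 alpha kd r gamma (zsub k)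
  = psiG_integrand beta kd t (r * cos phi) (r * sin phi) k.
Proof.
  unfold f2, psiG_integrand, dzsub. rewrite A_2_zsub, sqrt_zsub_sq_add1.
  pose proof (wavenumber_sq_pos k). pose proof (zsub_scale_pos k).
  field. repeat split; nra.
Qed.

End Substitution.

Lemma psiG_improper_int_zsub beta kd t r phi :
  0 < beta -> 0 < kd -> 0 < t -> 0 < r ->
  exists I,
    improper_int (psiG_integrand beta kd t (r * cos phi) (r * sin phi)) 0 I /\
    is_lim (fun b => RInt (f2 (beta * r * t) kd r (cos (phi / 2)))
                          (zsub beta kd t r 0) b) p_infty I.
Proof.
  intros hbeta hkd ht hr.
  pose proof (alpha_pos beta t r hbeta ht hr) as halpha.
  set (F := f2 (beta * r * t) kd r (cos (phi / 2))).
  assert (HF : forall z, continuous F z) by (intro; apply continuous_f2, halpha).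
  destruct (f2_decay (beta * r * t) kd r (cos (phi / 2)) halpha) as [Z0 [D [hZ0 Hdecay]]].
  destruct (ex_lim_RInt_decay F Z0 D HF hZ0 Hdecay (zsub beta kd t r 0)) as [I HI].
  exists I. split; [|exact HI].
  assert (Hsubst : forall k, dzsub beta kd t r k * F (zsub beta kd t r k)
                             = psiG_integrand beta kd t (r * cos phi) (r * sin phi) k)
    by (intro; apply psiG_integrand_zsub; auto).
  apply improper_int_of_is_lim.
  - intros k _. eapply continuous_ext; [exact Hsubst|].
    apply (continuous_mult (K := R_AbsRing)); [apply continuous_dzsub; auto|].
    apply (continuous_comp (zsub beta kd t r) F); [|apply HF].
    apply continuous_of_ex_derive. eexists. apply is_derive_zsub; auto.
  - eapply is_lim_ext; [intro b; apply RInt_ext; intros k _; apply Hsubst|].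
    apply is_lim_RInt_comp; auto using is_derive_zsub, continuous_dzsub, is_lim_zsub.
Qed.

Lemma near_region_z0_pos beta kd t r : 0 < beta -> 0 < kd -> 0 < t -> 0 < r ->
  r < beta * t / kd ^ 2 ->
  0 < (beta * r * t - kd ^ 2 * r ^ 2) / (sqrt (4 * (beta * r * t)) * kd * r).
Proof.
  intros hbeta hkd ht hr hnear. pose proof (pow_lt kd 2 hkd).
  pose proof (alpha_pos beta t r hbeta ht hr).
  apply Rmult_lt_compat_r with (r := kd ^ 2) in hnear; [|lra].
  replace (beta * t / kd ^ 2 * kd ^ 2) with (beta * t) in hnear by (field; lra).
  apply Rdiv_lt_0_compat; [nra|].
  repeat apply Rmult_lt_0_compat; auto. apply sqrt_lt_R0. lra.
Qed.

Lemma far_region_z0_pos beta kd t r : 0 < beta -> 0 < kd -> 0 < t -> 0 < r ->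
  beta * t / kd ^ 2 < r ->
  0 < (kd ^ 2 * r ^ 2 - beta * r * t) / (sqrt (4 * (beta * r * t)) * kd * r).
Proof.
  intros hbeta hkd ht hr hfar. pose proof (pow_lt kd 2 hkd).
  pose proof (alpha_pos beta t r hbeta ht hr).
  apply Rmult_lt_compat_r with (r := kd ^ 2) in hfar; [|lra].
  replace (beta * t / kd ^ 2 * kd ^ 2) with (beta * t) in hfar by (field; lra).
  apply Rdiv_lt_0_compat; [nra|].
  repeat apply Rmult_lt_0_compat; auto. apply sqrt_lt_R0. lra.
Qed.

Theorem proposition3p3 (beta kd N t r phi : R)
  (hbeta : 0 < beta) (hkd : 0 < kd) (ht : 0 < t) (hr : 0 < r) :
  let x := r * cos phi in
  let y := r * sin phi in
  let alpha := beta * r * t in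
  let gamma := cos (phi / 2) in
  let f1 := fun z : R => J0 (A_1 alpha kd r gamma z) / sqrt (z ^ 2 + 1) in
  let f2 := fun z : R => J0 (A_2 alpha kd r gamma z) / sqrt (z ^ 2 + 1) in
  (* (i) near region *)
  (r < beta * t / kd ^ 2 ->
   let z01 := (alpha - kd ^ 2 * r ^ 2) / (sqrt (4 * alpha) * kd * r) in
   0 < z01 /\
   exists psi I1 I2 I3,
     psiG_value beta kd N t x y psi /\
     (exists pr : Riemann_integrable f1 0 z01, RiemannInt pr = I1) /\
     improper_int f2 0 I2 /\
     improper_int f2 (- z01) I3 /\
     psi = - (N / (2 * PI)) * (I1 + I2) /\
     psi = - (N / (2 * PI)) * I3) /\
  (* (ii) far region *)
  (beta * t / kd ^ 2 < r ->
   let z02 := (kd ^ 2 * r ^ 2 - alpha) / (sqrt (4 * alpha) * kd * r) in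
   0 < z02 /\
   exists psi I,
     psiG_value beta kd N t x y psi /\
     improper_int f2 z02 I /\
     psi = - (N / (2 * PI)) * I).
Proof.
  intros x y alpha gamma F1 F2.
  assert (halpha : 0 < alpha) by (apply alpha_pos; auto).
  assert (F2_cont : forall z, continuous F2 z) by exact (continuous_f2 alpha kd r gamma halpha).
  destruct (psiG_improper_int_zsub beta kd t r phi hbeta hkd ht hr) as [I [Hpsi HI]].
  rewrite zsub_0 in HI by auto.
  split.
  - intros hnear z01. split; [apply near_region_z0_pos; auto|].
    replace (kd ^ 2 * r ^ 2 - beta * r * t) with (- (alpha - kd ^ 2 * r ^ 2)) in HI
      by (unfold alpha; ring).
    rewrite Rdiv_opp_l in HI. fold z01 in HI.
    pose proof (is_lim_RInt_Chasles F2 (- z01) 0 I F2_cont HI) as HI0.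
    rewrite <- (RInt_f1_f2 alpha kd r gamma halpha) in HI0.
    exists (- (N / (2 * PI)) * I), (RInt F1 0 z01), (I - RInt F1 0 z01), I.
    split; [exists I; auto|].
    split; [apply RiemannInt_continuous, continuous_f1, halpha|].
    split; [apply improper_int_of_is_lim; auto|].
    split; [apply improper_int_of_is_lim; auto|].
    split; ring.
  - intros hfar z02. split; [apply far_region_z0_pos; auto|].
    exists (- (N / (2 * PI)) * I), I.
    split; [exists I; auto|].
    split; [apply improper_int_of_is_lim; auto|reflexivity].
Qed.
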